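(* The graph $T_8$ is a minimal non-word-representable graph: $T_8$ is not word-representable, but every graph obtained from $T_8$ by deleting one vertex is word-representable.
   Context: A graph $G=(V,E)$ is word-representable if there exists a word $w$ over the alphabet $V$ such that for all distinct $x,y\in V$, the letters $x$ and $y$ alternate in $w$ if and only if $xy\in E$ (alternation meaning that deleting all letters other than $x$ and $y$ leaves $xyxy\cdots$ or $yxyx\cdots$). The graph $T_8$ has vertex set $\{1,\dots,9\}$; the vertices $1,2,3,4,5$ form a clique, the vertices $6,7,8,9$ form an independent set, and the remaining edges are: $6$ is adjacent to $1,3$; $7$ is adjacent to $2,4$; $8$ is adjacent to $1,2,5$; $9$ is adjacent to $1,2,3,4$. *)

From mathcomp Require Import all_boot.
Set Implicit Arguments. Unset Strict Implicit. Unset Printing Implicit Defensive.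

Definition alternate (T : eqType) (w : seq T) (x y : T) : bool :=
  sorted (fun a b => a != b) [seq z <- w | (z == x) || (z == y)].

Definition word_representable (T : finType) (e : rel T) : Prop :=
  exists w : seq T, (forall x : T, x \in w) /\
    (forall x y : T, x != y -> (alternate w x y <-> e x y)).

Definition del_vertex_rel (T : finType) (e : rel T) (v : T)
  : rel {x : T | x != v} := fun x y => e (val x) (val y).
Arguments del_vertex_rel {T} e v.

Definition T8_edge_list : seq (nat * nat) :=
  [:: (1,2); (1,3); (1,4); (1,5); (2,3); (2,4); (2,5); (3,4); (3,5); (4,5);
      (6,1); (6,3); (7,2); (7,4); (8,1); (8,2); (8,5);
      (9,1); (9,2); (9,3); (9,4)].

Definition T8_adj (a b : nat) : bool :=
  ((a, b) \in T8_edge_list) || ((b, a) \in T8_edge_list).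

(* Vertex type: i : 'I_9 stands for vertex label i+1. *)
Definition T8 : rel 'I_9 := fun i j => T8_adj i.+1 j.+1.

From mathcomp Require Import all_boot zify.
Set Implicit Arguments. Unset Strict Implicit. Unset Printing Implicit Defensive.

(* Count letters in prefixes: x and y alternate in w, with x occurring first,
   iff every prefix of w contains as many x's as y's or one more.  These
   inequalities chain, so if a, b, c, d occur first in this order in a word
   representing a graph, the edges ab, bc, cd and ad force the edges ac and bd.
   Hence the order of first occurrences has no "shortcut" a < b < c < d (edges
   ab, bc, cd, ad, but not both ac and bd).  A pruned search through the 9!
   orders of the vertices of T_8 finds a shortcut in each of them, while every
   vertex-deleted subgraph is represented by an explicit word. *)

Section Alternation.
Variable T : eqType.
Implicit Types (u w : seq T) (x y z : T).

Definition balanced u x y :=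
  count_mem y u <= count_mem x u <= (count_mem y u).+1.

Definition leads w x y := forall n, balanced (take n w) x y.

Lemma leads_cons_self x y w : x != y -> leads (x :: w) x y <-> leads w y x.
Proof.
move=> nxy; have bal_x u : balanced (x :: u) x y = balanced u y x.
  by rewrite /balanced /= eqxx (negbTE nxy) add0n add1n ltnS andbC.
split=> lw n; first by have := lw n.+1; rewrite bal_x.
by case: n => [|n] //=; rewrite bal_x.
Qed.

Lemma leads_cons_other x y w : x != y -> ~ leads (y :: w) x y.
Proof. by move=> nxy /(_ 1); rewrite /balanced /= take0 eqxx eq_sym (negbTE nxy). Qed.

Lemma leads_cons_skip x y z w : z != x -> z != y ->
  leads (z :: w) x y <-> leads w x y.
Proof.
move=> nzx nzy; have bal_z u : balanced (z :: u) x y = balanced u x y.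
  by rewrite /balanced /= (negbTE nzx) (negbTE nzy).
split=> lw n; first by have := lw n.+1; rewrite /= bal_z.
by case: n => [|n] //=; rewrite bal_z.
Qed.

Lemma leads_filter (P : pred T) x y w : P x -> P y -> x != y ->
  leads (filter P w) x y <-> leads w x y.
Proof.
elim: w x y => [|z w IH] x y Px Py nxy //=.
have nyx : y != x by rewrite eq_sym.
have [->|nzx] := eqVneq z x.
  by rewrite Px !leads_cons_self //; apply: IH.
have [->|nzy] := eqVneq z y.
  by rewrite Py; split=> /leads_cons_other.
rewrite (leads_cons_skip _ nzx nzy) -IH //.
by case: (P z); rewrite ?(leads_cons_skip _ nzx nzy).
Qed.

Lemma sorted_neq_leads x y s : x != y ->
  all (fun z => (z == x) || (z == y)) s ->
  sorted (fun a b => a != b) (x :: s) <-> leads (x :: s) x y.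
Proof.
elim: s x y => [|z s IH] x y nxy /=; first by rewrite leads_cons_self.
have nyx : y != x by rewrite eq_sym.
case/andP=> /orP[]/eqP-> alls.
  by rewrite eqxx; split=> // /(leads_cons_self _ nxy)/(leads_cons_other nyx).
by rewrite nxy leads_cons_self // (IH y x) // (eq_all (fun a => orbC (a == y) (a == x))).
Qed.

Lemma alternate_leads x y w : x != y ->
  alternate w x y <-> leads w x y \/ leads w y x.
Proof.
move=> nxy; have nyx : y != x by rewrite eq_sym.
set P := fun z => (z == x) || (z == y).
have Px : P x by rewrite /P eqxx.
have Py : P y by rewrite /P eqxx orbT.
rewrite /alternate -(leads_filter _ Px Py nxy) -(leads_filter _ Py Px nyx).
have := filter_all P w; rewrite -/P.
case: (filter P w) => [|z s]; first by split=> // _; left.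
case/andP=> /orP[]/eqP-> alls.
  rewrite (sorted_neq_leads nxy alls); split; first by left.
  by case=> // /(leads_cons_other nyx).
have alls' : all (fun a => (a == y) || (a == x)) s.
  by apply/allP=> a /(allP alls); rewrite orbC.
rewrite (sorted_neq_leads nyx alls'); split; first by right.
by case=> // /(leads_cons_other nxy).
Qed.

Lemma leads_index x y w : x \in w -> index x w < index y w -> ~ leads w y x.
Proof.
move=> xw lt_xy /(_ (index x w).+1); rewrite /balanced.
have: y \notin take (index x w).+1 w.
  by rewrite in_take_leq ?index_mem // ltnS -ltnNge.
move/count_memPn=> ->; rewrite leqn0 => /andP[/eqP/count_memPn].
by rewrite in_take // ltnSn.
Qed.

Lemma neq_of_index_lt x y w : index x w < index y w -> x != y.
Proof. by apply: contraTneq => ->; rewrite ltnn. Qed.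

Lemma alternate_leads_first x y w : index x w < index y w ->
  alternate w x y -> leads w x y.
Proof.
move=> lt_xy; have xw : x \in w.
  by rewrite -index_mem (leq_trans lt_xy) ?index_size.
by case/(alternate_leads _ (neq_of_index_lt lt_xy))=> // /(leads_index xw lt_xy).
Qed.

Lemma leads_shortcut a b c d w : leads w a b -> leads w b c -> leads w c d ->
  leads w a d -> leads w a c /\ leads w b d.
Proof.
move=> lab lbc lcd lad; split=> n;
move: (lab n) (lbc n) (lcd n) (lad n); rewrite /balanced;
move=> /andP[? ?] /andP[? ?] /andP[? ?] /andP[? ?]; apply/andP; split; lia.
Qed.

Lemma alternate_shortcut a b c d w :
  index a w < index b w -> index b w < index c w -> index c w < index d w ->
  alternate w a b -> alternate w b c -> alternate w c d -> alternate w a d ->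
  alternate w a c /\ alternate w b d.
Proof.
move=> lab lbc lcd /(alternate_leads_first lab) Lab
  /(alternate_leads_first lbc) Lbc /(alternate_leads_first lcd) Lcd.
have lac := ltn_trans lab lbc; have lbd := ltn_trans lbc lcd.
move=> /(alternate_leads_first (ltn_trans lac lcd)) Lad.
have [Lac Lbd] := leads_shortcut Lab Lbc Lcd Lad.
split; first by apply/(alternate_leads _ (neq_of_index_lt lac)); left.
by apply/(alternate_leads _ (neq_of_index_lt lbd)); left.
Qed.

Lemma alternate_filter (P : pred T) w x y : P x -> P y ->
  alternate (filter P w) x y = alternate w x y.
Proof.
move=> Px Py; rewrite /alternate -filter_predI; congr sorted.
by apply: eq_filter => z /=; case: eqP => [->|_]; case: eqP => [->|_]; rewrite ?andbF.
Qed.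

End Alternation.

Lemma alternate_map (T U : eqType) (f : T -> U) w x y : injective f ->
  alternate (map f w) (f x) (f y) = alternate w x y.
Proof.
move=> finj; rewrite /alternate filter_map sorted_map.
rewrite (eq_filter (a2 := fun z => (z == x) || (z == y))); last first.
  by move=> z /=; rewrite !(inj_eq finj).
by case: (filter _ w) => //= z s; apply: eq_path => a b /=; rewrite (inj_eq finj).
Qed.

Section Representation.
Variable U : eqType.
Implicit Types (e : rel U) (V w : seq U).

Definition represents e V w : bool :=
  all (mem w) V &&
  all (fun x => all (fun y => (x != y) ==> (alternate w x y == e x y)) V) V.

Lemma representsP e V w :
  reflect ({subset V <= w} /\ {in V &, forall x y, x != y -> alternate w x y = e x y})
          (represents e V w).
Proof.
apply: (iffP andP) => [[/allP Vw /allP altV]|[Vw altV]]; split.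
- exact: Vw.
- by move=> x y xV yV nxy; have /allP/(_ y yV) := altV x xV; rewrite nxy => /eqP.
- exact/allP.
- apply/allP=> x xV; apply/allP=> y yV; apply/implyP=> nxy.
  by rewrite altV.
Qed.

Definition shortcut e (a b c d : U) : bool :=
  [&& e a b, e b c, e c d, e a d & ~~ (e a c && e b d)].

Lemma represents_shortcut_free_order e V w : uniq V -> represents e V w ->
  exists2 s, perm_eq s V &
    forall a b c d, subseq [:: a; b; c; d] s -> ~~ shortcut e a b c d.
Proof.
move=> uV /representsP[Vw altV].
pose s := sort (relpre (index^~ w) leq) V.
have sV : s =i V by apply: mem_sort.
exists s; first by rewrite perm_sort.
have s_lt : sorted ltn (map (index^~ w) s).
  rewrite ltn_sorted_uniq_leq sorted_map sort_sorted; last first.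
    by move=> x y; apply: leq_total.
  rewrite map_inj_in_uniq ?sort_uniq ?uV // => x y xs ys.
  by apply: (index_inj x (Vw x _) (Vw y _)); rewrite -sV.
move=> a b c d sub4; have inV x : x \in [:: a; b; c; d] -> x \in V.
  by move=> /(mem_subseq sub4); rewrite sV.
have /= /and4P[lab lbc lcd _] := subseq_sorted ltn_trans (map_subseq _ sub4) s_lt.
have lac := ltn_trans lab lbc; have lbd := ltn_trans lbc lcd.
have lad := ltn_trans lac lcd.
have := alternate_shortcut lab lbc lcd.
move: (neq_of_index_lt lab) (neq_of_index_lt lbc) (neq_of_index_lt lcd)
  (neq_of_index_lt lac) (neq_of_index_lt lbd) (neq_of_index_lt lad).
move=> nab nbc ncd nac nbd nad.
rewrite !altV ?inV ?inE ?eqxx ?orbT // => shortcut_closed.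
by apply/negP=> /and5P[eab ebc ecd ead]; case: (shortcut_closed eab ebc ecd ead) => -> ->.
Qed.

End Representation.

Lemma represents_map (T U : eqType) (f : T -> U) (e : rel U) (V w : seq T) :
  injective f -> represents (relpre f e) V w = represents e (map f V) (map f w).
Proof.
move=> finj; rewrite /represents !all_map; congr andb; apply: eq_all => x /=.
  by rewrite mem_map.
rewrite all_map; apply: eq_all => y /=.
by rewrite (inj_eq finj) alternate_map.
Qed.

Lemma word_representable_represents (T : finType) (e : rel T) :
  word_representable e -> exists w, represents e (enum T) w.
Proof.
case=> w [allw altw]; exists w; apply/representsP; split=> [x _|x y _ _ nxy].
  exact: allw.
by apply/idP/idP=> /(altw x y nxy).
Qed.

Lemma represents_del_vertex (T : finType) (e : rel T) (v : T) (w : seq T) :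
  represents e [seq x <- enum T | x != v] w -> word_representable (del_vertex_rel e v).
Proof.
have inV (x : {x : T | x != v}) : val x \in [seq x <- enum T | x != v].
  by rewrite mem_filter (valP x) mem_enum.
case/representsP=> Vw altV; exists (pmap insub w); split=> [x|x y nxy].
  by rewrite mem_pmap_sub Vw.
rewrite -(alternate_map _ _ _ val_inj) (pmap_filter (@insubK _ _ _)).
by rewrite alternate_filter /= ?valK // altV //; apply: inV.
Qed.

Section OrderSearch.
Variables (T : eqType) (closers : T -> seq (seq T)).

(* [n] is [size r]; it only makes the recursion structural. *)
Fixpoint every_order_closes (n : nat) (p r : seq T) : bool :=
  if n is n'.+1 then
    all (fun x => has (subseq^~ p) (closers x) ||
                  every_order_closes n' (rcons p x) (rem x r)) r
  else false.

Lemma every_order_closes_sound n p r s :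
  every_order_closes n p r -> size r = n -> perm_eq s r ->
  exists x t, t \in closers x /\ subseq (rcons t x) (p ++ s).
Proof.
elim: n p r s => [|n IH] p r [|x s] //= closes_r size_r perm_sr.
  by have := perm_size perm_sr; rewrite size_r.
have xr : x \in r by rewrite -(perm_mem perm_sr) mem_head.
case/orP: (allP closes_r x xr) => [/hasP[t tx sub_tp]|closes_rem].
  exists x, t; split=> //; rewrite -cats1.
  by apply: cat_subseq sub_tp _; rewrite sub1seq mem_head.
rewrite -cat_rcons; apply: IH closes_rem _ _; first by rewrite size_rem ?size_r.
by rewrite -(perm_cons x); apply: perm_trans perm_sr (perm_to_rem xr).
Qed.

End OrderSearch.

Section Shortcuts.
Variables (U : eqType) (e : rel U) (V : seq U).

(* Only distinct quadruples occur in an order; keeping just those shrinks the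
   table fourfold. *)
Definition closing_triples (d : U) : seq (seq U) :=
  [seq t <- [seq rcons t c | t <- [seq [:: a; b] | a <- V, b <- V], c <- V] |
   if t is [:: a; b; c] then uniq [:: a; b; c; d] && shortcut e a b c d else false].

(* The table is computed once and then looked up at every node of the search. *)
Definition shortcut_closers : U -> seq (seq U) :=
  let table := map closing_triples V in fun d => nth [::] table (index d V).

Lemma mem_shortcut_closers d t : t \in shortcut_closers d ->
  exists a b c, t = [:: a; b; c] /\ shortcut e a b c d.
Proof.
rewrite /shortcut_closers; have [dV|dnV] := boolP (d \in V); last first.
  by rewrite nth_default // size_map memNindex.
rewrite (nth_map d) ?index_mem // nth_index // mem_filter.
by case: t => [|a [|b [|c []]]] //= /andP[/andP[_ sc] _]; exists a, b, c.
Qed.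

Lemma every_order_has_shortcut s :
  every_order_closes shortcut_closers (size V) [::] V -> perm_eq s V ->
  exists a b c d, subseq [:: a; b; c; d] s /\ shortcut e a b c d.
Proof.
move=> closes_V /(every_order_closes_sound closes_V erefl) [d [t [/mem_shortcut_closers]]].
by case=> [a [b [c [-> sc]]]] sub; exists a, b, c, d.
Qed.

Lemma not_represents_of_closes w : uniq V ->
  every_order_closes shortcut_closers (size V) [::] V -> ~~ represents e V w.
Proof.
move=> uV closes_V; apply/negP=> /(represents_shortcut_free_order uV) [s perm_sV free_s].
have [a [b [c [d [sub sc]]]]] := every_order_has_shortcut closes_V perm_sV.
by move: (free_s a b c d sub); rewrite sc.
Qed.

End Shortcuts.

Definition T8_label (i : 'I_9) : nat := i.+1.

Lemma T8_label_inj : injective T8_label.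
Proof. by move=> i j [] /val_inj. Qed.

Lemma T8_relpre : T8 = relpre T8_label T8_adj.
Proof. by []. Qed.

Lemma T8_label_enum : map T8_label (enum 'I_9) = iota 1 9.
Proof. by rewrite -[iota 1 9]/(map succn (iota 0 9)) -val_enum_ord -map_comp. Qed.

(* About 100000 nodes; the kernel runs the computation once, at Qed. *)
Lemma T8_closes :
  every_order_closes (shortcut_closers T8_adj (iota 1 9)) 9 [::] (iota 1 9).
Proof. vm_cast_no_check (erefl true). Qed.

Lemma T8_not_word_representable : ~ word_representable T8.
Proof.
case/word_representable_represents=> w; apply/negP.
rewrite T8_relpre represents_map ?T8_label_enum; last exact: T8_label_inj.
exact: not_represents_of_closes (iota_uniq 1 9) T8_closes.
Qed.

Definition T8_del_word (v : nat) : seq nat :=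
  match v with
  | 1 => [:: 2; 4; 7; 3; 9; 8; 5; 2; 8; 4; 6; 3; 6; 5; 9; 7]
  | 2 => [:: 1; 3; 6; 4; 9; 8; 5; 1; 8; 3; 7; 4; 7; 5; 9; 6]
  | 3 => [:: 1; 2; 8; 4; 5; 9; 6; 1; 6; 7; 2; 4; 7; 9; 8; 5]
  | 4 => [:: 1; 2; 5; 8; 9; 6; 3; 1; 6; 7; 2; 7; 9; 5; 3; 8]
  | 5 => [:: 1; 2; 8; 4; 9; 6; 3; 1; 6; 7; 2; 4; 7; 9; 3; 8]
  | 6 => [:: 1; 2; 8; 4; 3; 5; 9; 1; 7; 2; 4; 7; 3; 9; 8; 5]
  | 7 => [:: 1; 2; 5; 8; 9; 4; 6; 3; 1; 6; 2; 9; 5; 4; 3; 8]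
  | 8 => [:: 1; 2; 4; 5; 9; 6; 3; 1; 6; 7; 2; 4; 7; 9; 5; 3]
  | 9 => [:: 1; 3; 6; 4; 8; 2; 5; 1; 8; 3; 7; 4; 2; 7; 5; 6]
  | _ => [::]
  end.

Lemma T8_del_words_represent : all (fun v =>
  represents T8_adj [seq i <- iota 1 9 | i != v] (T8_del_word v) &&
  all (fun i => 0 < i <= 9) (T8_del_word v)) (iota 1 9).
Proof. by vm_compute. Qed.

Lemma T8_del_word_representable (v : 'I_9) : word_representable (del_vertex_rel T8 v).
Proof.
have v_label : T8_label v \in iota 1 9 by rewrite -T8_label_enum map_f ?mem_enum.
have /andP[rep labels] := allP T8_del_words_represent _ v_label.
pose w := map (fun i => inord i.-1 : 'I_9) (T8_del_word (T8_label v)).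
have wK : map T8_label w = T8_del_word (T8_label v).
  rewrite -map_comp map_id_in // => -[|i] /(allP labels) //= i_lt9.
  by rewrite /T8_label inordK.
have VK : map T8_label [seq x <- enum 'I_9 | x != v] = [seq i <- iota 1 9 | i != T8_label v].
  (* what remains is closed by conversion: [x.+1 != v.+1] reduces to [x != v] *)
  by rewrite -T8_label_enum [RHS]filter_map.
apply: (@represents_del_vertex _ _ _ w).
by rewrite T8_relpre represents_map ?wK ?VK //; apply: T8_label_inj.
Qed.

Theorem theorem16 :
  ~ word_representable T8 /\
  (forall v : 'I_9, word_representable (del_vertex_rel T8 v)).
Proof. by split; [exact: T8_not_word_representable | exact: T8_del_word_representable]. Qed.
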